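(* Let $\mathcal{C}\subseteq\mathbb{F}_q^n$ be a GQC code with orbit lengths $l_1,\dots,l_m$, and let $\mathcal{C}^\perp$ be its dual code. Let $\mathcal{G}=\{g_1,\dots,g_m\}$ be a Gröbner basis of $\overline{\mathcal{C}}$ and $\mathcal{H}=\{h_1,\dots,h_m\}$ a Gröbner basis of $\overline{\mathcal{C}^\perp}$, both with respect to an arbitrary monomial ordering on $\mathbb{F}_q[t]^m$, and regard their elements as elements of $M$ via $\pi$. Then for all $1\le i,j\le m$, $\langle g_i,h_j\rangle\equiv\langle h_j,g_i\rangle\equiv 0 \pmod{t^{l}-1}$, where $l$ is the modulus appearing in the definition of each respective scalar product.
   Context: Let $q$ be a prime power. A linear code $\mathcal{C}\subseteq\mathbb{F}_q^n$ is a generalized quasi-cyclic (GQC) code with orbit lengths $l_1,\dots,l_m$ ($m<n$, $l_1+\dots+l_m=n$) if, writing each codeword as $c=(c_1,\dots,c_m)$ with blocks $c_i=(c_{i,0},\dots,c_{i,l_i-1})$ of length $l_i$, $\mathcal{C}$ is closed under the simultaneous local cyclic shift $\sigma$ sending each block $c_i$ to $(c_{i,l_i-1},c_{i,0},\dots,c_{i,l_i-2})$. Identify $c$ with $(c_1(t),\dots,c_m(t))\in M:=\bigoplus_{i=1}^m\mathbb{F}_q[t]/(t^{l_i}-1)$, where $c_i(t)=\sum_{j=0}^{l_i-1}c_{i,j}t^j$; then $\sigma$ is multiplication by $t$ and $\mathcal{C}$ is an $\mathbb{F}_q[t]$-submodule of $M$. Elements of $\mathbb{F}_q[t]/(t^{l_i}-1)$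 are identified with their representatives of degree $<l_i$. Let $\pi:\mathbb{F}_q[t]^m\to M$ be the natural projection and $\overline{\mathcal{C}}:=\pi^{-1}(\mathcal{C})$, a submodule of $\mathbb{F}_q[t]^m$. The dual code $\mathcal{C}^\perp$ (with respect to the standard bilinear form on $\mathbb{F}_q^n$) is again GQC with the same orbit lengths, and $\overline{\mathcal{C}^\perp}:=\pi^{-1}(\mathcal{C}^\perp)$. For $a(t)=\sum_{j=0}^{l-1}a_jt^j\in\mathbb{F}_q[t]/(t^l-1)$ put $\widehat{a}(t):=a_0+a_{l-1}t+\dots+a_1t^{l-1}$. For $u=(u_1,\dots,u_m),v=(v_1,\dots,v_m)\in M$ define the scalar product $\langle u,v\rangle:=\sum_{i=1}^m u_i(t)\widehat{v}_i(t)\sum_{k=0}^{l/l_i-1}t^{kl_i}\bmod (t^l-1)$, where $\widehat{v}_i$ is computed in $\mathbb{F}_q[t]/(t^{l_i}-1)$ and $l$ is the least common multiple of those $l_i$ for which both $u_i$ and $v_i$ are nonzero. *)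

From HB Require Import structures.
From mathcomp Require Import all_boot all_order all_algebra.
Set Implicit Arguments. Unset Strict Implicit. Unset Printing Implicit Defensive.
Import Order.TTheory GRing.Theory.
Local Open Scope ring_scope.

Section GQC.
Variables (F : fieldType) (m : nat) (l : 'I_m -> nat).

(* Elements of F[t]^m (and, when reduced, of M = (+)_i F[t]/(t^{l_i}-1)). *)
Definition vec := 'I_m -> {poly F}.

Definition inM (v : vec) : Prop := forall i, (size (v i) <= l i)%N.

Definition piM (v : vec) : vec := fun i => v i %% ('X^(l i) - 1).

Definition shiftM (v : vec) : vec := piM (fun i => 'X * v i).

(* A linear code in M (via the identification F_q^n = M). *)
Definition linear_code (C : vec -> Prop) : Prop :=
  (forall v, C v -> inM v) /\ C (fun _ => 0) /\
  (forall u v, C u -> C v -> C (fun i => u i + v i)) /\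
  (forall (a : F) v, C v -> C (fun i => a *: v i)).

Definition GQC_code (C : vec -> Prop) : Prop :=
  linear_code C /\ forall v, C v -> C (shiftM v).

Definition stdform (u v : vec) : F :=
  \sum_(i < m) \sum_(j < l i) (u i)`_j * (v i)`_j.

Definition dual (C : vec -> Prop) : vec -> Prop :=
  fun d => inM d /\ forall c, C c -> stdform c d = 0.

Definition Cbar (C : vec -> Prop) : vec -> Prop := fun v => C (piM v).

Definition hatp (L : nat) (a : {poly F}) : {poly F} :=
  \poly_(j < L) a`_((L - j) %% L).

Definition sp_mod (u v : vec) : nat :=
  \big[lcmn/1%N]_(i < m | (u i != 0) && (v i != 0)) l i.

Definition scalar_prod (u v : vec) : {poly F} :=
  let L := sp_mod u v in
  (\sum_(i < m | (u i != 0) && (v i != 0))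
      u i * hatp (l i) (v i) * \sum_(k < L %/ l i) 'X^(k * l i))
  %% ('X^L - 1).

End GQC.

Section Groebner.
Variables (F : fieldType) (m : nat).

(* Module monomials t^a e_i are encoded as pairs (a, i). A monomial ordering
   is a strict total order, well-founded, compatible with multiplication by t^c. *)
Definition monomial_order (lt : rel (nat * 'I_m)) : Prop :=
  (forall x, ~~ lt x x) /\
  (forall x y z, lt x y -> lt y z -> lt x z) /\
  (forall x y, x != y -> lt x y || lt y x) /\
  well_founded (fun x y => lt x y) /\
  (forall a b c i j, lt (a, i) (b, j) -> lt (a + c, i)%N (b + c, j)%N).

Definition is_LM (lt : rel (nat * 'I_m)) (v : vec F m) (x : nat * 'I_m) : Prop :=
  (v x.2)`_(x.1) != 0 /\
  forall y : nat * 'I_m, (v y.2)`_(y.1) != 0 -> y != x -> lt y x.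

Definition groebner_basis (lt : rel (nat * 'I_m)) (N : vec F m -> Prop)
  (k : nat) (G : 'I_k -> vec F m) : Prop :=
  (forall s, N (G s)) /\
  forall f, N f -> (exists i, f i != 0) ->
    exists s a b i, is_LM lt (G s) (a, i) /\ is_LM lt f (b, i) /\ (a <= b)%N.

End Groebner.

From HB Require Import structures.
From mathcomp Require Import all_boot all_order all_algebra.
From mathcomp Require Import zify.
Set Implicit Arguments.
Unset Strict Implicit.
Unset Printing Implicit Defensive.

Import GRing.Theory.
Local Open Scope ring_scope.

(* Reducing u_i * hat(v_i) modulo t^{l_i} - 1 gives the cyclic correlation of
   the two blocks: its coefficient of t^k is the block-i part of the standard
   form of u against sigma^k v. Multiplying by 1 + t^{l_i} + ... spreads this
   l_i-periodic correlation over the common period l, so the coefficient of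
   t^n in <u, v> is the standard form of u against sigma^n v. Since sigma is an
   isometry of the standard form and sigma^l is the identity, the dual of a GQC
   code is again GQC; so for g in C and h in C^perp every coefficient of
   <g, h> and of <h, g> is a value of the standard form on C x C^perp. *)

Lemma eq_negmodC (L j c : nat) : (c < L)%N -> (j < L)%N ->
  (j == (L - c) %% L)%N = (c == (L - j) %% L)%N.
Proof.
move=> ltcL ltjL.
have negmodE k : (k < L)%N -> ((L - k) %% L = if k == 0 then 0 else L - k)%N.
  move=> ltkL; case: eqP => [->|/eqP k0]; first by rewrite subn0 modnn.
  by rewrite modn_small // ltn_subrL lt0n k0 (leq_ltn_trans _ ltkL).
rewrite !negmodE //; apply/eqP/eqP; case: eqP; case: eqP; lia.
Qed.

Lemma eq_modn_add_negmod (L a c n : nat) : (a < L)%N -> (c < L)%N ->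
  (n %% L == (a + (L - c) %% L) %% L)%N = (a == (c + n) %% L)%N.
Proof.
move=> ltaL ltcL.
rewrite eq_sym -[a in RHS](modn_small ltaL) -(eqn_modDr c) -addnA.
rewrite -modnDmr modnDml (subnK (ltnW ltcL)) modnn addn0.
by rewrite [(n + c)%N]addnC.
Qed.

Section CyclicPoly.
Variable F : fieldType.
Implicit Types p q : {poly F}.

Lemma sum_mulrn_eq (n t : nat) (f : nat -> F) :
  \sum_(c < n) f c *+ (c == t :> nat) = f t *+ (t < n)%N.
Proof.
under eq_bigr do rewrite mulrb.
by rewrite -big_mkcond big_ord1_eq mulrb.
Qed.

Lemma modp_sum (I : Type) (r : seq I) (P : pred I) (f : I -> {poly F}) d :
  (\sum_(i <- r | P i) f i) %% d = \sum_(i <- r | P i) (f i %% d).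
Proof. exact: (big_morph (fun p => p %% d) (modpD d) (mod0p d)). Qed.

Lemma poly_expand p (B : nat) : (size p <= B)%N ->
  p = \sum_(a < B) p`_a *: 'X^a.
Proof.
move=> hB; rewrite -poly_def; apply/polyP => k; rewrite coef_poly.
by case: ltnP => // hk; rewrite nth_default // (leq_trans hB hk).
Qed.

Lemma size_modp_Xn_sub1 (L : nat) p : (0 < L)%N ->
  (size (p %% ('X^L - 1))%R <= L)%N.
Proof.
move=> L_gt0; rewrite -ltnS -(@size_Xn_sub_1 F L L_gt0) ltn_modp -size_poly_eq0.
by rewrite size_Xn_sub_1.
Qed.

Lemma modp_Xn_Xn_sub1 (L e : nat) : (0 < L)%N ->
  ('X^e : {poly F}) %% ('X^L - 1) = 'X^(e %% L).
Proof.
move=> L_gt0.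
have -> : ('X^e : {poly F}) =
    'X^(e %% L) * (\sum_(i < e %/ L) ('X^L) ^+ i) * ('X^L - 1) + 'X^(e %% L).
  rewrite -mulrA [_ * ('X^L - 1)]mulrC -subrX1 -exprM mulrBr mulr1 -exprD.
  by rewrite subrK addnC mulnC -divn_eq.
by rewrite modp_addl_mul_small // size_Xn_sub_1 // size_polyXn ltnS ltn_mod.
Qed.

Lemma modp_XnM_modn (L N : nat) p : (0 < L)%N ->
  ('X^N * p) %% ('X^L - 1) = ('X^(N %% L) * p) %% ('X^L - 1).
Proof.
by move=> L_gt0; rewrite ![_ * p]mulrC -modp_mul modp_Xn_Xn_sub1.
Qed.

Lemma coef_modp_XnM (L N j : nat) p : (0 < L)%N -> (size p <= L)%N ->
  (('X^N * p) %% ('X^L - 1))`_j = \sum_(a < L) p`_a *+ ((a + N) %% L == j)%N.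
Proof.
move=> L_gt0 szp; rewrite {1}(poly_expand szp) mulr_sumr modp_sum coef_sum.
apply: eq_bigr => a _.
by rewrite -scalerAr -exprD modpZl modp_Xn_Xn_sub1 // coefZ coefXn mulr_natr addnC eq_sym.
Qed.

Lemma coef_modp_XnM_add (L N a : nat) p : (0 < L)%N -> (size p <= L)%N ->
  (a < L)%N -> (('X^N * p) %% ('X^L - 1))`_((a + N) %% L) = p`_a.
Proof.
move=> L_gt0 szp ltaL; rewrite coef_modp_XnM //.
under eq_bigr => c _ do rewrite eqn_modDr !modn_small //.
by rewrite (sum_mulrn_eq _ _ (fun c => p`_c)) ltaL.
Qed.

(* [(L - c) %% L] is the residue of [-c]. *)
Lemma hatp_expand (L : nat) q : (0 < L)%N -> (size q <= L)%N ->
  hatp L q = \sum_(c < L) q`_c *: 'X^((L - c) %% L).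
Proof.
move=> L_gt0 szq; apply/polyP => j; rewrite coef_poly coef_sum.
under eq_bigr => c _ do rewrite coefZ coefXn mulr_natr.
case: ltnP => ltjL.
  under eq_bigr => c _ do rewrite (eq_negmodC (ltn_ord c) ltjL).
  by rewrite (sum_mulrn_eq _ _ (fun c => q`_c)) ltn_pmod.
rewrite big1 // => c _.
by rewrite gtn_eqF ?mulr0n // (leq_trans _ ltjL) // ltn_pmod.
Qed.

Lemma coef_modp_mul_hatp (L k : nat) p q : (0 < L)%N ->
  (size p <= L)%N -> (size q <= L)%N ->
  ((p * hatp L q) %% ('X^L - 1))`_(k %% L) =
  \sum_(j < L) p`_j * (('X^k * q) %% ('X^L - 1))`_j.
Proof.
move=> L_gt0 szp szq.
transitivity (\sum_(c < L) p`_((c + k) %% L) * q`_c).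
  rewrite hatp_expand // {1}(poly_expand szp) mulr_suml.
  under eq_bigr do rewrite mulr_sumr.
  rewrite modp_sum coef_sum.
  under eq_bigr do rewrite modp_sum coef_sum.
  rewrite exchange_big /=.
  apply: eq_bigr => c _.
  under eq_bigr => a _ do rewrite -scalerAl -scalerAr -exprD scalerA modpZl
    modp_Xn_Xn_sub1 // coefZ coefXn mulr_natr eq_modn_add_negmod //.
  by rewrite (sum_mulrn_eq _ _ (fun a => p`_a * q`_c)) ltn_pmod.
under [RHS]eq_bigr => j _ do rewrite coef_modp_XnM // mulr_sumr.
rewrite exchange_big /=; apply: eq_bigr => c _.
under eq_bigr => j _ do rewrite mulrnAr [_ * _]mulrC eq_sym.
by rewrite (sum_mulrn_eq _ _ (fun j => q`_c * p`_j)) ltn_pmod // mulrC.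
Qed.

Lemma coef_mul_periodic (l K n : nat) p : (0 < l)%N -> (size p <= l)%N ->
  (p * \sum_(s < K) 'X^(s * l))`_n = p`_(n %% l) *+ (n < K * l)%N.
Proof.
move=> l_gt0 szp.
have coef_term (s : nat) : (p * 'X^(s * l))`_n = p`_(n %% l) *+ (s == n %/ l)%N.
  rewrite coefMXn; have n_eq := divn_eq n l; have := ltn_pmod n l_gt0.
  case: (ltngtP s (n %/ l)) => [lt_s|gt_s|->] lt_r.
  - rewrite ifF; last by apply/negbTE; rewrite -leqNgt; nia.
    by rewrite nth_default //; apply: (leq_trans szp); nia.
  - by rewrite ifT //; nia.
  - by rewrite ifF ?mulr1n; [congr (_`_ _); lia | apply/negbTE; rewrite -leqNgt; lia].
rewrite mulr_sumr coef_sum; under eq_bigr => s _ do rewrite coef_term.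
by rewrite (sum_mulrn_eq _ _ (fun _ => p`_(n %% l))) ltn_divLR.
Qed.

Lemma modp_mul_periodic (l L : nat) p : (0 < l)%N -> (l %| L)%N -> (0 < L)%N ->
  (p * \sum_(k < L %/ l) 'X^(k * l)) %% ('X^L - 1) =
  \poly_(n < L) (p %% ('X^l - 1))`_(n %% l).
Proof.
move=> l_gt0 dvd_lL L_gt0.
set T := \sum_(k < L %/ l) _.
have XlT : ('X^l - 1) * T = 'X^L - 1.
  rewrite /T; under eq_bigr do rewrite mulnC exprM.
  by rewrite -subrX1 -exprM mulnC divnK.
have unfold_period : (p %% ('X^l - 1)) * T =
    \poly_(n < L) (p %% ('X^l - 1))`_(n %% l).
  apply/polyP => n.
  by rewrite coef_mul_periodic ?size_modp_Xn_sub1 // coef_poly divnK // mulrb.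
rewrite {1}(divp_eq p ('X^l - 1)) mulrDl -mulrA XlT unfold_period.
by rewrite modp_addl_mul_small // size_Xn_sub_1 // ltnS size_poly.
Qed.

End CyclicPoly.

Section GQC.
Variables (F : fieldType) (m : nat) (l : 'I_m -> nat).
Hypothesis l_gt0 : forall i, (0 < l i)%N.
Implicit Types (u v : vec F m) (C : vec F m -> Prop).

Lemma inM_piM v : inM l (piM l v).
Proof. by move=> i; apply: size_modp_Xn_sub1. Qed.

Lemma iter_shiftME v (N : nat) i : inM l v ->
  iter N (shiftM l) v i = ('X^N * v i) %% ('X^(l i) - 1).
Proof.
move=> vM; elim: N => [|N IH] /=.
  by rewrite mul1r modp_small // size_Xn_sub_1 // ltnS.
by rewrite /shiftM /piM IH modp_mul mulrA -exprS.
Qed.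

Lemma stdformC u v : stdform l u v = stdform l v u.
Proof.
by apply: eq_bigr => i _; apply: eq_bigr => j _; rewrite mulrC.
Qed.

Lemma stdform_iter_shiftM u v (N : nat) : inM l u -> inM l v ->
  stdform l (iter N (shiftM l) u) (iter N (shiftM l) v) = stdform l u v.
Proof.
move=> uM vM; apply: eq_bigr => i _.
have addN_inj : injective (fun a : 'I_(l i) => Ordinal (ltn_pmod (a + N) (l_gt0 i))).
  move=> a b [] /eqP; rewrite eqn_modDr !modn_small // => /eqP; exact: val_inj.
rewrite (reindex_inj addN_inj); apply: eq_bigr => a _ /=.
by rewrite !iter_shiftME // !coef_modp_XnM_add.
Qed.

Lemma iter_shiftM_period v (P : nat) i : inM l v -> (forall k, l k %| P)%N ->
  iter P (shiftM l) v i = v i.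
Proof.
move=> vM dvd_lP; rewrite iter_shiftME // modp_XnM_modn //.
by rewrite (eqP (dvd_lP i)) mul1r modp_small // size_Xn_sub_1 // ltnS.
Qed.

Lemma GQC_iter_shiftM C v (N : nat) : GQC_code l C -> C v -> C (iter N (shiftM l) v).
Proof. by case=> _ shiftC Cv; elim: N => //= N; apply: shiftC. Qed.

Lemma dual_shiftM C v : GQC_code l C -> dual l C v -> dual l C (shiftM l v).
Proof.
move=> GQC_C [vM v_orth]; split=> [|c Cc]; first exact: inM_piM.
have [[codeM _] _] := GQC_C; have cM := codeM c Cc.
(* sigma^P is the identity, so c = sigma c' and sigma preserves the form. *)
pose P := (\prod_(k < m) l k)%N.
have dvd_lP k : (l k %| P)%N by rewrite /P (bigD1 k) //= dvdn_mulr.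
have P_gt0 : (0 < P)%N by rewrite prodn_gt0.
pose c' := iter P.-1 (shiftM l) c.
have c'M : inM l c' by move=> i; rewrite /c' iter_shiftME // size_modp_Xn_sub1.
transitivity (stdform l (shiftM l c') (shiftM l v)).
  apply: eq_bigr => i _; apply: eq_bigr => j _.
  by rewrite -[shiftM l c']/(iter P.-1.+1 (shiftM l) c) prednK // iter_shiftM_period.
rewrite (stdform_iter_shiftM 1) //; apply: v_orth.
exact: GQC_iter_shiftM.
Qed.

Lemma GQC_dual C : GQC_code l C -> GQC_code l (dual l C).
Proof.
move=> GQC_C; split; last by move=> v; apply: dual_shiftM.
split; first by move=> v [].
split.
  split=> [i|c _]; first by rewrite size_poly0.
  by do 2!(apply: big1 => ? _); rewrite coef0 mulr0.
split=> [u v [uM u_orth] [vM v_orth]|a v [vM v_orth]]; split.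
- by move=> i; rewrite (leq_trans (size_polyD _ _)) // geq_max uM vM.
- move=> c Cc; rewrite -[0]addr0 -{1}(u_orth c Cc) -(v_orth c Cc) -big_split.
  apply: eq_bigr => i _; rewrite -big_split; apply: eq_bigr => j _.
  by rewrite coefD mulrDr.
- by move=> i; rewrite (leq_trans (size_scale_leq _ _)).
- move=> c Cc; rewrite -(mulr0 a) -(v_orth c Cc) /stdform mulr_sumr.
  apply: eq_bigr => i _; rewrite mulr_sumr; apply: eq_bigr => j _.
  by rewrite coefZ mulrCA.
Qed.

Lemma sp_mod_gt0 u v : (0 < sp_mod l u v)%N.
Proof.
apply: (big_ind (fun k => 0 < k)%N) => [//|a b a_gt0 b_gt0|i _].
  by rewrite lcmn_gt0 a_gt0 b_gt0.
exact: l_gt0.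
Qed.

Lemma dvdn_sp_mod u v i : u i != 0 -> v i != 0 -> (l i %| sp_mod l u v)%N.
Proof. by move=> ui vi; rewrite /sp_mod (bigD1 i) ?ui ?vi //= dvdn_lcml. Qed.

Lemma coef_scalar_prod u v (n : nat) : inM l u -> inM l v ->
  (scalar_prod l u v)`_n =
  stdform l u (iter n (shiftM l) v) *+ (n < sp_mod l u v)%N.
Proof.
move=> uM vM; rewrite /scalar_prod /= modp_sum coef_sum.
under eq_bigr => i /andP[ui vi] do
  rewrite modp_mul_periodic ?dvdn_sp_mod ?sp_mod_gt0 // coef_poly.
case: ltnP => [ltnL|_]; last by rewrite big1 ?mulr0n.
rewrite mulr1n /stdform [RHS](bigID (fun i => (u i != 0) && (v i != 0))) /=.
rewrite [X in _ = _ + X]big1 ?addr0 => [|i].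
  apply: eq_bigr => i _; rewrite coef_modp_mul_hatp //.
  by apply: eq_bigr => j _; rewrite iter_shiftME.
rewrite negb_and => /orP[] /negPn /eqP uv0; apply: big1 => j _.
  by rewrite uv0 coef0 mul0r.
by rewrite iter_shiftME // uv0 mulr0 mod0p coef0 mulr0.
Qed.

Lemma scalar_prod_eq0 u v : inM l u -> inM l v ->
  (forall n : nat, stdform l u (iter n (shiftM l) v) = 0) ->
  scalar_prod l u v = 0.
Proof.
move=> uM vM orth; apply/polyP => n.
by rewrite coef_scalar_prod // orth mul0rn coef0.
Qed.

End GQC.

Theorem theorem1 (F : finFieldType) (m : nat) (l : 'I_m -> nat)
  (hl : forall i, (0 < l i)%N) (hmn : (m < \sum_(i < m) l i)%N)
  (C : vec F m -> Prop) (hC : GQC_code l C)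
  (lt : rel (nat * 'I_m)) (hlt : monomial_order lt)
  (g h : 'I_m -> vec F m)
  (hg : groebner_basis lt (Cbar l C) g)
  (hh : groebner_basis lt (Cbar l (dual l C)) h) :
  forall i j : 'I_m,
    scalar_prod l (piM l (g i)) (piM l (h j)) = 0 /\
    scalar_prod l (piM l (h j)) (piM l (g i)) = 0.
Proof.
move=> i j.
have Cg : C (piM l (g i)) := hg.1 i.
have dual_h : dual l C (piM l (h j)) := hh.1 j.
have hC_dual := GQC_dual hl hC.
split; apply: (scalar_prod_eq0 hl) => [||n]; try exact: inM_piM.
  exact: (GQC_iter_shiftM n hC_dual dual_h).2 _ Cg.
by rewrite stdformC; apply: dual_h.2; apply: GQC_iter_shiftM.
Qed.
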